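(* Let $\mathbb{K}\in\{\mathbb{R},\mathbb{C},\mathbb{H}\}$, $d(\mathbb{K})=1,2,4$ respectively, and $S(\mathbb{K})$ the group of elements of norm $1$ in $\mathbb{K}$ (so $\mathbb{Z}_2$, $U(1)$, $\mathrm{Sp}(1)$). For $k\geqslant 2$ let $S(\mathbb{K})^{k-1}$ act linearly on $\mathbb{K}^k$ by \[ (g_1,\ldots,g_{k-1})\cdot(q_1,\ldots,q_k)=(q_1g_1^{-1},\,g_1q_2g_2^{-1},\,\ldots,\,g_{k-2}q_{k-1}g_{k-1}^{-1},\,g_{k-1}q_k). \] Then the orbit space $\mathbb{K}^k/S(\mathbb{K})^{k-1}$ is homeomorphic to $\mathbb{R}^{d(\mathbb{K})+k-1}$. *)

From HB Require Import structures.
From mathcomp Require Import all_boot all_order all_algebra.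
From mathcomp Require Import all_classical all_reals topology normedtype matrix_topology.
Import numFieldNormedType.Exports.
From mathcomp Require Import ring.

Set Implicit Arguments.
Unset Strict Implicit.
Unset Printing Implicit Defensive.

Import Order.TTheory GRing.Theory Num.Theory.
Local Open Scope ring_scope.

Inductive KK := KR | KC | KH.

Definition dK (K : KK) : nat := match K with KR => 1 | KC => 2 | KH => 4 end.

Lemma dK_gt0 K : (0 < dK K)%N. Proof. by case: K. Qed.
Lemma dK_le4 K : (dK K <= 4)%N. Proof. by case: K. Qed.

Section Quaternions.
Variable R : realType.

(* Quaternions a + b i + c j + d k; K is realised as the real subspace of
   H spanned by the first d(K) basis vectors 1, i, j, k
   (R = span{1}, C = span{1,i}, H = everything). *)
Record quat := Quat { qa : R; qb : R; qc : R; qd : R }.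

Definition qone : quat := Quat 1 0 0 0.

Definition qmul (p q : quat) : quat :=
  Quat (qa p * qa q - qb p * qb q - qc p * qc q - qd p * qd q)
       (qa p * qb q + qb p * qa q + qc p * qd q - qd p * qc q)
       (qa p * qc q - qb p * qd q + qc p * qa q + qd p * qb q)
       (qa p * qd q + qb p * qc q - qc p * qb q + qd p * qa q).

Definition qconj (q : quat) : quat := Quat (qa q) (- qb q) (- qc q) (- qd q).

Definition qnorm2 (q : quat) : R := qa q ^+ 2 + qb q ^+ 2 + qc q ^+ 2 + qd q ^+ 2.

Definition qscale (r : R) (q : quat) : quat :=
  Quat (r * qa q) (r * qb q) (r * qc q) (r * qd q).

Definition qinv (q : quat) : quat := qscale (qnorm2 q)^-1 (qconj q).

Definition qcomp (q : quat) (n : nat) : R := nth 0 [:: qa q; qb q; qc q; qd q] n.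

Definition coord (d : nat) (v : 'rV[R]_d) (n : nat) : R :=
  if @insub nat (fun m => (m < d)%N) 'I_d n is Some i then v ord0 i else 0.

Definition emb (d : nat) (v : 'rV[R]_d) : quat :=
  Quat (coord v 0) (coord v 1) (coord v 2) (coord v 3).

Definition rowq (m d : nat) (M : 'M[R]_(m, d)) (i : 'I_m) : quat := emb (row i M).

End Quaternions.

Section Action.
Variables (R : realType) (K : KK) (k : nat).
Local Notation d := (dK K).

(* An element (q_1,...,q_k) of K^k is a k x d(K) real matrix (row i = q_{i+1});
   an element (g_1,...,g_{k-1}) of S(K)^{k-1} is a (k-1) x d(K) real matrix
   whose rows have norm 1. *)

(* g_{n+1} for n < k-1, and 1 otherwise *)
Definition gext (G : 'M[R]_(k.-1, d)) (n : nat) : quat R :=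
  if @insub nat (fun m => (m < k.-1)%N) 'I_(k.-1) n is Some o then rowq G o
  else qone R.

(* left factor of coordinate i (0-based): 1 for i = 0, else g_i *)
Definition lfac (G : 'M[R]_(k.-1, d)) (i : 'I_k) : quat R :=
  if val i is n.+1 then gext G n else qone R.

(* right factor of coordinate i (0-based): g_{i+1}, and 1 for i = k-1 *)
Definition rfac (G : 'M[R]_(k.-1, d)) (i : 'I_k) : quat R := gext G i.

Definition unit_tuple (G : 'M[R]_(k.-1, d)) : Prop :=
  forall o : 'I_(k.-1), qnorm2 (rowq G o) = 1.

Definition act (G : 'M[R]_(k.-1, d)) (X : 'M[R]_(k, d)) : 'M[R]_(k, d) :=
  \matrix_(i < k, j < d)
    qcomp (qmul (qmul (lfac G i) (rowq X i)) (qinv (rfac G i))) j.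

Definition same_orbit (X Y : 'M[R]_(k, d)) : Prop :=
  exists G : 'M[R]_(k.-1, d), unit_tuple G /\ act G X = Y.

Definition orbit_rel : rel 'M[R]_(k, d) := fun X Y => `[< same_orbit X Y >].

End Action.

Section Equiv.
Variable R : realType.

Lemma qmulA (p q r : quat R) : qmul p (qmul q r) = qmul (qmul p q) r.
Proof. case: p q r => [? ? ? ?] [? ? ? ?] [? ? ? ?]; rewrite /qmul /=; congr Quat; ring. Qed.
Lemma qmul1q (q : quat R) : qmul (qone R) q = q.
Proof. case: q => ? ? ? ?; rewrite /qmul /=; congr Quat; ring. Qed.
Lemma qmulq1 (q : quat R) : qmul q (qone R) = q.
Proof. case: q => ? ? ? ?; rewrite /qmul /=; congr Quat; ring. Qed.
Lemma qconj_mul (p q : quat R) : qconj (qmul p q) = qmul (qconj q) (qconj p).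
Proof. case: p q => [? ? ? ?] [? ? ? ?]; rewrite /qmul /qconj /=; congr Quat; ring. Qed.
Lemma qconjK (q : quat R) : qconj (qconj q) = q.
Proof. by case: q => ? ? ? ?; rewrite /qconj /= !opprK. Qed.
Lemma qnorm2_mul (p q : quat R) : qnorm2 (qmul p q) = qnorm2 p * qnorm2 q.
Proof. case: p q => [? ? ? ?] [? ? ? ?]; rewrite /qnorm2 /qmul /=; ring. Qed.
Lemma qnorm2_conj (q : quat R) : qnorm2 (qconj q) = qnorm2 q.
Proof. case: q => ? ? ? ?; rewrite /qnorm2 /qconj /=; ring. Qed.
Lemma qnorm2_one : qnorm2 (qone R) = 1.
Proof. rewrite /qnorm2 /=; ring. Qed.
Lemma qconj_one : qconj (qone R) = qone R.
Proof. by rewrite /qconj /= oppr0. Qed.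
Lemma qinv_unit (u : quat R) : qnorm2 u = 1 -> qinv u = qconj u.
Proof.
move=> h; rewrite /qinv h invr1; case: u h => ? ? ? ? _.
by rewrite /qscale /qconj /= !mul1r.
Qed.
Lemma qconjM_unit (u : quat R) : qnorm2 u = 1 -> qmul (qconj u) u = qone R.
Proof.
case: u => a b c e; rewrite /qnorm2 /qmul /qconj /qone /= => h.
congr Quat; rewrite -?h; ring.
Qed.
Lemma qmulconj_unit (u : quat R) : qnorm2 u = 1 -> qmul u (qconj u) = qone R.
Proof.
case: u => a b c e; rewrite /qnorm2 /qmul /qconj /qone /= => h.
congr Quat; rewrite -?h; ring.
Qed.

Definition inK (d : nat) (q : quat R) := forall j, (d <= j)%N -> qcomp q j = 0.

Lemma qcompE (q : quat R) : Quat (qcomp q 0) (qcomp q 1) (qcomp q 2) (qcomp q 3) = q.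
Proof. by case: q. Qed.

Lemma coord_lt d (v : 'rV[R]_d) j (h : (j < d)%N) : coord v j = v ord0 (Ordinal h).
Proof. by rewrite /coord insubT. Qed.
Lemma coord_ge d (v : 'rV[R]_d) j : (d <= j)%N -> coord v j = 0.
Proof. by move=> h; rewrite /coord insubF // ltnNge h. Qed.

Lemma qcomp_emb d (v : 'rV[R]_d) j : (d <= 4)%N -> qcomp (emb v) j = coord v j.
Proof.
move=> hd; case: j => [|[|[|[|j]]]] //=.
by rewrite /qcomp /= nth_nil coord_ge // (leq_trans hd).
Qed.

Lemma emb_inj d (v w : 'rV[R]_d) : (d <= 4)%N -> emb v = emb w -> v = w.
Proof.
move=> hd e; apply/rowP => i.
have E (u : 'rV[R]_d) : u ord0 i = qcomp (emb u) i.
  rewrite qcomp_emb // (coord_lt _ (ltn_ord i)); congr (u _ _); exact: val_inj.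
by rewrite !E e.
Qed.

Lemma coord_row d (f : nat -> R) n :
  coord (\row_(j < d) f j) n = if (n < d)%N then f n else 0.
Proof. by case: ltnP => h; [rewrite (coord_lt _ h) mxE | rewrite coord_ge]. Qed.

Lemma emb_proj d (q : quat R) : (d <= 4)%N -> inK d q ->
  emb (\row_(j < d) qcomp q j) = q.
Proof.
move=> hd hq; have H n : (if (n < d)%N then qcomp q n else 0) = qcomp q n.
  by case: ltnP => // h; rewrite hq.
by rewrite /emb !coord_row !H qcompE.
Qed.

Lemma qcomp_conj (q : quat R) j : (0 < j)%N -> qcomp (qconj q) j = - qcomp q j.
Proof. by case: j => [|[|[|[|j]]]] //= _; rewrite /qcomp /= nth_nil oppr0. Qed.
Lemma qcomp_scale r (q : quat R) j : qcomp (qscale r q) j = r * qcomp q j.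
Proof. by case: j => [|[|[|[|j]]]] //=; rewrite /qcomp /= nth_nil mulr0. Qed.

Lemma inK_emb K (v : 'rV[R]_(dK K)) : inK (dK K) (emb v).
Proof. by move=> j hj; rewrite qcomp_emb ?dK_le4 // coord_ge. Qed.
Lemma inK_one K : inK (dK K) (qone R).
Proof.
move=> j hj; case: j hj => [|[|[|[|j]]]] //=; first by rewrite leqNgt dK_gt0.
by rewrite /qcomp /= nth_nil.
Qed.
Lemma inK_conj K (q : quat R) : inK (dK K) q -> inK (dK K) (qconj q).
Proof.
move=> hq j hj; rewrite qcomp_conj ?hq ?oppr0 //.
exact: leq_trans (dK_gt0 K) hj.
Qed.
Lemma inK_inv K (q : quat R) : inK (dK K) q -> inK (dK K) (qinv q).
Proof. by move=> hq j hj; rewrite /qinv qcomp_scale (inK_conj hq hj) mulr0. Qed.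
Lemma inK_mul K (p q : quat R) :
  inK (dK K) p -> inK (dK K) q -> inK (dK K) (qmul p q).
Proof.
case: p q => [a b c e] [a' b' c' e'] hp hq j hj.
case: K hp hq hj => hp hq hj.
- move: (hp 1%N isT) (hp 2%N isT) (hp 3%N isT) (hq 1%N isT) (hq 2%N isT) (hq 3%N isT).
  rewrite /qcomp /= => -> -> -> -> -> ->.
  by case: j hj => [|[|[|[|j]]]] //= _; rewrite /qcomp /= ?nth_nil //; ring.
- move: (hp 2%N isT) (hp 3%N isT) (hq 2%N isT) (hq 3%N isT).
  rewrite /qcomp /= => -> -> -> ->.
  by case: j hj => [|[|[|[|j]]]] //= _; rewrite /qcomp /= ?nth_nil //; ring.
- by case: j hj => [|[|[|[|j]]]] //= _; rewrite /qcomp /= ?nth_nil.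
Qed.

End Equiv.

Section EquivAct.
Variables (R : realType) (K : KK) (k : nat).
Local Notation d := (dK K).
Local Notation same_orbit := (@same_orbit R K k).
Local Notation act := (@act R K k).
Local Notation unit_tuple := (@unit_tuple R K k).
Local Notation gext := (@gext R K k).
Local Notation lfac := (@lfac R K k).
Local Notation rfac := (@rfac R K k).

Lemma inK_gext (G : 'M[R]_(k.-1, d)) n : inK d (gext G n).
Proof. rewrite /gext; case: insub => [o|]; [exact: inK_emb | exact: inK_one]. Qed.
Lemma inK_lfac (G : 'M[R]_(k.-1, d)) i : inK d (lfac G i).
Proof. rewrite /lfac; case: (val i) => [|n]; [exact: inK_one | exact: inK_gext]. Qed.

Lemma unit_gext (G : 'M[R]_(k.-1, d)) n : unit_tuple G -> qnorm2 (gext G n) = 1.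
Proof. by move=> hG; rewrite /gext; case: insub => [o|]; [exact: hG | exact: qnorm2_one]. Qed.
Lemma unit_lfac (G : 'M[R]_(k.-1, d)) i : unit_tuple G -> qnorm2 (lfac G i) = 1.
Proof. by move=> hG; rewrite /lfac; case: (val i) => [|n]; [exact: qnorm2_one | exact: unit_gext]. Qed.

Lemma act_rowsP (G : 'M[R]_(k.-1, d)) X Y :
  act G X = Y <->
  forall i, rowq Y i = qmul (qmul (lfac G i) (rowq X i)) (qinv (rfac G i)).
Proof.
split.
- move=> <- i; rewrite /rowq.
  have -> : row i (act G X) =
    \row_(j < d) qcomp (qmul (qmul (lfac G i) (rowq X i)) (qinv (rfac G i))) j.
    by apply/rowP => j; rewrite !mxE.
  apply: emb_proj; first exact: dK_le4.
  by apply: inK_mul; [apply: inK_mul; [exact: inK_lfac | exact: inK_emb]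
                     | apply: inK_inv; exact: inK_gext].
- move=> H; apply/matrixP => i j; rewrite mxE -H /rowq qcomp_emb ?dK_le4 //.
  by rewrite (coord_lt _ (ltn_ord j)) mxE; congr (Y _ _); exact: val_inj.
Qed.

Lemma gext_map (G G' : 'M[R]_(k.-1, d)) (f : quat R -> quat R) :
  f (qone R) = qone R -> (forall o, rowq G' o = f (rowq G o)) ->
  forall n, gext G' n = f (gext G n).
Proof. by move=> f1 hf n; rewrite /gext; case: insub => [o|]. Qed.

Lemma lfac_map (G G' : 'M[R]_(k.-1, d)) (f : quat R -> quat R) :
  f (qone R) = qone R -> (forall o, rowq G' o = f (rowq G o)) ->
  forall i, lfac G' i = f (lfac G i).
Proof. by move=> f1 hf i; rewrite /lfac; case: (val i) => // n; apply: gext_map. Qed.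

Lemma same_orbit_refl X : same_orbit X X.
Proof.
pose G0 : 'M[R]_(k.-1, d) := \matrix_(o, j) (val j == 0%N)%:R.
have r1 o : rowq G0 o = qone R.
  rewrite /rowq (_ : row o G0 = \row_(j < d) (j == 0%N :> nat)%:R); last first.
    by apply/rowP => j; rewrite !mxE.
  by rewrite /emb !(coord_row _ (fun n : nat => (n == 0%N)%:R)) dK_gt0 !if_same.
have hl i : lfac G0 i = qone R.
  by rewrite (@lfac_map G0 G0 (fun _ => qone R)).
have hr i : rfac G0 i = qone R.
  by rewrite /rfac (@gext_map G0 G0 (fun _ => qone R)).
exists G0; split; first by move=> o; rewrite r1 qnorm2_one.
apply/act_rowsP => i; rewrite hl hr qinv_unit ?qnorm2_one // qconj_one.
by rewrite qmul1q qmulq1.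
Qed.

Lemma same_orbit_sym X Y : same_orbit X Y -> same_orbit Y X.
Proof.
move=> [G [hG /act_rowsP hXY]].
pose G' : 'M[R]_(k.-1, d) := \matrix_(o, j) qcomp (qconj (rowq G o)) j.
have r1 o : rowq G' o = qconj (rowq G o).
  rewrite /rowq (_ : row o G' = \row_(j < d) qcomp (qconj (rowq G o)) j).
    by apply: emb_proj; [exact: dK_le4 | apply: inK_conj; exact: inK_emb].
  by apply/rowP => j; rewrite !mxE.
have hl i : lfac G' i = qconj (lfac G i) by apply: lfac_map => //; exact: qconj_one.
have hr i : rfac G' i = qconj (rfac G i) by apply: gext_map => //; exact: qconj_one.
exists G'; split; first by move=> o; rewrite r1 qnorm2_conj.
apply/act_rowsP => i; rewrite hl hr hXY.
have uL := unit_lfac i hG; have uR : qnorm2 (rfac G i) = 1 by exact: unit_gext.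
rewrite !qinv_unit ?qnorm2_conj // qconjK.
by rewrite !qmulA (qconjM_unit uL) qmul1q -qmulA (qconjM_unit uR) qmulq1.
Qed.

Lemma same_orbit_trans X Y Z : same_orbit X Y -> same_orbit Y Z -> same_orbit X Z.
Proof.
move=> [G [hG /act_rowsP hXY]] [H [hH /act_rowsP hYZ]].
pose G'' : 'M[R]_(k.-1, d) := \matrix_(o, j) qcomp (qmul (rowq H o) (rowq G o)) j.
have r1 o : rowq G'' o = qmul (rowq H o) (rowq G o).
  rewrite /rowq (_ : row o G'' = \row_(j < d) qcomp (qmul (rowq H o) (rowq G o)) j).
    by apply: emb_proj; [exact: dK_le4 | apply: inK_mul; exact: inK_emb].
  by apply/rowP => j; rewrite !mxE.
have hl i : lfac G'' i = qmul (lfac H i) (lfac G i).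
  rewrite /lfac; case: (val i) => [|n]; first by rewrite qmul1q.
  by rewrite /gext; case: insub => [o|]; [exact: r1 | rewrite qmul1q].
have hr i : rfac G'' i = qmul (rfac H i) (rfac G i).
  by rewrite /rfac /gext; case: insub => [o|]; [exact: r1 | rewrite qmul1q].
exists G''; split; first by move=> o; rewrite r1 qnorm2_mul hH hG mulr1.
apply/act_rowsP => i; rewrite hl hr hYZ hXY.
have uRG : qnorm2 (rfac G i) = 1 by exact: unit_gext.
have uRH : qnorm2 (rfac H i) = 1 by exact: unit_gext.
rewrite !qinv_unit ?qnorm2_mul ?uRG ?uRH ?mulr1 // qconj_mul.
by rewrite !qmulA.
Qed.

Lemma orbit_rel_equiv : equiv_class_of (@orbit_rel R K k).
Proof.
split.
- by move=> X; apply/asboolP; exact: same_orbit_refl.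
- by move=> X Y; apply/idP/idP => /asboolP h; apply/asboolP; exact: same_orbit_sym.
- move=> Y X Z /asboolP h1 /asboolP h2; apply/asboolP; exact: same_orbit_trans h1 h2.
Qed.

End EquivAct.

Canonical orbit_equiv_rel (R : realType) (K : KK) (k : nat) :=
  EquivRelPack (@orbit_rel_equiv R K k).

Local Open Scope quotient_scope.

Notation orbit_space R K k :=
  (quotient_topology {eq_quot (@orbit_rel R K k)}).

Definition homeomorphism {X Y : topologicalType} (f : X -> Y) (g : Y -> X) : Prop :=
  [/\ cancel f g, cancel g f, continuous f & continuous g].

(* Write S_j = q_j q_(j+1) ... q_k. As (g.q)_j = g_(j-1) q_j g_j^-1 with
   g_0 = g_k = 1, the action sends S_j to g_(j-1) S_j, so the numbers
   t_j = |q_j|^2 - |S_(j+1)|^2 (1 <= j < k) and S_1 are invariants; together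
   they form a continuous map K^k -> R^(k-1) x K = R^(d+k-1).
   For k = 2, a b and |a|^2 - |b|^2 determine (a, b) up to (a u^-1, u b);
   applied to the pairs (q_j, S_(j+1)) one index at a time, this moves X onto
   any Y with the same invariants, so the fibres of the map are the orbits.
   The map is onto (solve the k = 2 case successively) and proper, since
   |S_(j+1)|^2 <= |S_j|^2 + |t_j| + 1 bounds every |q_j|. A continuous closed
   surjection whose fibres are the orbits induces a homeomorphism of the orbit
   space. *)

From Pilot Require Import Defs.
From HB Require Import structures.
From mathcomp Require Import all_boot all_order all_algebra.
From mathcomp Require Import all_classical all_reals topology normedtype matrix_topology.
Import numFieldNormedType.Exports.
From mathcomp Require Import ring lra.

Set Implicit Arguments.
Unset Strict Implicit.
Unset Printing Implicit Defensive.

Import Order.TTheory GRing.Theory Num.Theory.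
Local Open Scope ring_scope.
Local Open Scope classical_set_scope.

Section MatrixTopology.
Variable R : realType.

Lemma mx_continuous (T : topologicalType) m n (f : T -> 'M[R]_(m, n)) :
  (forall i j, continuous (fun x => f x i j)) -> continuous f.
Proof.
move=> fijC x; apply/cvg_ballP => e e0.
have : \forall y \near x, forall ij : 'I_m * 'I_n,
    ball (f x ij.1 ij.2) e (f y ij.1 ij.2).
  by apply: filter_forall => -[i j]; move/cvg_ballP: (fijC i j x); apply.
by apply: filterS => y fxy; split => // i j; exact: (fxy (i, j)).
Qed.

Lemma vec_mx_continuous m n : continuous (@vec_mx R m n).
Proof.
apply: mx_continuous => i j.
rewrite (_ : (fun v => vec_mx v i j) = fun v => v ord0 (mxvec_index i j)).
  exact: coord_continuous.
by apply: funext => v; rewrite mxE.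
Qed.

Lemma mx_box_compact m n (B : R) :
  compact [set X : 'M[R]_(m, n) | forall i j, `|X i j| <= B].
Proof.
have vbox : compact [set v : 'rV[R]_(m * n) | forall l, `[- B, B] (v ord0 l)].
  exact: (rV_compact (A := fun=> `[- B, B]) (fun=> @segment_compact R _ _)).
rewrite (_ : mkset _ =
    @vec_mx R m n @` [set v : 'rV[R]_(m * n) | forall l, `[- B, B] (v ord0 l)]).
  by apply: continuous_compact vbox; exact/continuous_subspaceT/vec_mx_continuous.
apply/seteqP; split => [X XB | _ [v vB <-] i j].
  exists (mxvec X); last exact: mxvecK.
  by move=> l; case/mxvec_indexP: l => i j; rewrite mxvecE /= in_itv /= -ler_norml.
by have := vB (mxvec_index i j); rewrite mxE /= in_itv /= -ler_norml.
Qed.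

End MatrixTopology.

Lemma proper_closed_map (T U : topologicalType) (F : T -> U) :
  hausdorff_space U -> continuous F ->
  (forall y : U, exists2 N, nbhs y N & exists2 C, compact C & F @^-1` N `<=` C) ->
  forall A, closed A -> closed (F @` A).
Proof.
move=> hU FC Fproper A Acl y yFA.
have [N Ny [C Ccpt NC]] := Fproper y.
have FCA : closed (F @` (C `&` A)).
  apply: compact_closed hU _; apply: continuous_compact; last first.
    exact: compact_closedI.
  exact: continuous_subspaceT.
suff : (F @` (C `&` A)) y by case=> x [_ Ax] <-; exists x.
apply: FCA => B By.
have [_ [[x Ax <-] [Bx Nx]]] := yFA _ (filterI By Ny).
by exists (F x); split => //; exists x => //; split => //; exact: NC.
Qed.

Section QuotientHomeomorphism.
Local Open Scope quotient_scope.
Variables (T U : topologicalType) (e : equiv_rel T) (F : T -> U).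
Local Notation Q := (quotient_topology {eq_quot e}).

Lemma quotient_homeomorphism :
  continuous F -> (forall x y, F x = F y <-> e x y) ->
  (forall y, exists x, F x = y) -> (forall A, closed A -> closed (F @` A)) ->
  exists (f : Q -> U) (g : U -> Q), homeomorphism f g.
Proof.
move=> FC Fe Fsurj Fclosed.
pose s y := proj1_sig (cid (Fsurj y)).
have sK y : F (s y) = y := proj2_sig (cid (Fsurj y)).
have F_repr x : F (repr (\pi_Q x)) = F x by apply/Fe/eqmodP; rewrite reprK.
pose f (z : Q) := F (repr z); pose g y : Q := \pi_Q (s y).
have gK : cancel g f by move=> y; rewrite /f /g F_repr sK.
have fK : cancel f g.
  by move=> z; rewrite /f /g -[RHS]reprK; apply/eqmodP/Fe; rewrite sK.
exists f, g; split => //.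
  apply/quotient_continuous; rewrite (_ : f \o \pi_Q = F) //.
  by apply: funext => x /=; rewrite /f F_repr.
apply/continuousP => V Vopen.
rewrite (_ : g @^-1` V = ~` (F @` ~` (\pi_Q @^-1` V))).
  by apply: closed_openC; apply: Fclosed; rewrite closedC.
apply/seteqP; split => y /=.
  by move=> gyV [x xV Fxy]; apply: xV; rewrite -[\pi_Q x]fK /f F_repr Fxy.
by move=> yV; apply: contrapT => gyV; apply: yV; exists (s y).
Qed.

End QuotientHomeomorphism.

Lemma eq_of_mul_sub (R : realFieldType) (x y x' y' : R) :
  0 <= x -> 0 <= y -> 0 <= x' -> 0 <= y' ->
  x * y = x' * y' -> x - y = x' - y' -> x = x' /\ y = y'.
Proof.
move=> x0 y0 x'0 y'0 xy xBy.
have : (x + y) ^+ 2 = (x' + y') ^+ 2.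
  by rewrite !sqrrD -[_ + y ^+ 2]addrAC -[_ + y' ^+ 2]addrAC; nra.
move/eqP; rewrite eqrXn2 ?addr_ge0 // => /eqP xDy.
by split; lra.
Qed.

Lemma lerD_normBM (R : realFieldType) (a b : R) :
  0 <= a -> 0 <= b -> a + b <= `|a - b| + 1 + a * b.
Proof.
move=> a0 b0; have [ba|ab] := leP b a.
  rewrite ger0_norm ?subr_ge0 //.
  have : 0 <= b * (a - b) by apply: mulr_ge0; lra.
  have : 0 <= (b - 1) ^+ 2 by exact: sqr_ge0.
  nra.
rewrite ltr0_norm ?subr_lt0 //.
have : 0 <= a * (b - a) by apply: mulr_ge0; lra.
have : 0 <= (a - 1) ^+ 2 by exact: sqr_ge0.
nra.
Qed.

Lemma normr_le1Dsqr (R : realFieldType) (x : R) : `|x| <= 1 + x ^+ 2.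
Proof. by rewrite ler_norml; apply/andP; split; nra. Qed.

HB.instance Definition _ (R : realType) :=
  Monoid.isLaw.Build (quat R) (qone R) (@qmul R) (@qmulA R) (@qmul1q R) (@qmulq1 R).

Section QuatAlgebra.
Variable R : realType.
Implicit Types (p q : quat R) (r s : R).

Definition qzero : quat R := Quat 0 0 0 0.
Definition qreal r : quat R := Quat r 0 0 0.

Lemma qnorm2_ge0 q : 0 <= qnorm2 q.
Proof. case: q => a b c e; rewrite /qnorm2 /=; nra. Qed.

Lemma qnorm2_eq0 q : qnorm2 q = 0 -> q = qzero.
Proof.
case: q => a b c e; rewrite /qnorm2 /= => q0.
by congr Quat; apply/eqP; rewrite -sqrf_eq0; apply/eqP; nra.
Qed.

Lemma qnorm2_real r : qnorm2 (qreal r) = r ^+ 2.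
Proof. by rewrite /qnorm2 /=; ring. Qed.

Lemma qnorm2_scale r q : qnorm2 (qscale r q) = r ^+ 2 * qnorm2 q.
Proof. by case: q => ? ? ? ?; rewrite /qnorm2 /=; ring. Qed.

Lemma qscaleA r s q : qscale r (qscale s q) = qscale (r * s) q.
Proof. by case: q => ? ? ? ?; congr Quat; rewrite /= mulrA. Qed.

Lemma qscale1 q : qscale 1 q = q.
Proof. by case: q => ? ? ? ?; congr Quat; rewrite /= mul1r. Qed.

Lemma qconj_scale r q : qconj (qscale r q) = qscale r (qconj q).
Proof. by case: q => ? ? ? ?; congr Quat; rewrite /= mulrN. Qed.

Lemma qmul_scalel r p q : qmul (qscale r p) q = qscale r (qmul p q).
Proof. by case: p q => [? ? ? ?] [? ? ? ?]; congr Quat; rewrite /=; ring. Qed.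

Lemma qmul_scaler r p q : qmul p (qscale r q) = qscale r (qmul p q).
Proof. by case: p q => [? ? ? ?] [? ? ? ?]; congr Quat; rewrite /=; ring. Qed.

Lemma qmul_reall r q : qmul (qreal r) q = qscale r q.
Proof. by case: q => ? ? ? ?; congr Quat; rewrite /=; ring. Qed.

Lemma qmul_realr r q : qmul q (qreal r) = qscale r q.
Proof. by case: q => ? ? ? ?; congr Quat; rewrite /=; ring. Qed.

Lemma qmul_real r s : qmul (qreal r) (qreal s) = qreal (r * s).
Proof. by congr Quat; rewrite /=; ring. Qed.

Lemma qmul0q q : qmul qzero q = qzero.
Proof. by case: q => ? ? ? ?; congr Quat; rewrite /=; ring. Qed.

Lemma qmulq0 q : qmul q qzero = qzero.
Proof. by case: q => ? ? ? ?; congr Quat; rewrite /=; ring. Qed.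

Lemma qmulq_conj q : qmul q (qconj q) = qreal (qnorm2 q).
Proof. by case: q => ? ? ? ?; congr Quat; rewrite /qnorm2 /=; ring. Qed.

Lemma qmul_conjq q : qmul (qconj q) q = qreal (qnorm2 q).
Proof. by case: q => ? ? ? ?; congr Quat; rewrite /qnorm2 /=; ring. Qed.

Lemma qcomp_sqr_le q c : qcomp q c ^+ 2 <= qnorm2 q.
Proof.
case: q => a b e f; rewrite /qnorm2 /qcomp.
by case: c => [|[|[|[|c]]]] /=; rewrite ?nth_nil ?expr0n /=; nra.
Qed.

Lemma inK_scale K r q : inK (dK K) q -> inK (dK K) (qscale r q).
Proof. by move=> qK j dj; rewrite qcomp_scale qK // mulr0. Qed.

Lemma inK_real K r : inK (dK K) (qreal r).
Proof.
case=> [|[|[|[|j]]]] //= dj; first by rewrite leqNgt dK_gt0 in dj.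
by rewrite /qcomp /= nth_nil.
Qed.

Lemma qnorm2_le4 (q : quat R) r :
  (forall c, (c < 4)%N -> qcomp q c ^+ 2 <= r) -> qnorm2 q <= 4 * r.
Proof.
move=> qr; have := qr 0%N isT; have := qr 1%N isT; have := qr 2%N isT.
have := qr 3%N isT; rewrite /qcomp /qnorm2 /=; lra.
Qed.

End QuatAlgebra.

Section QuatContinuity.
Variables (R : realType) (T : topologicalType).

Ltac cvg_arith := repeat match goal with
  | |- context [fun _ => _ + _] => apply: cvgD
  | |- context [fun _ => _ * _] => apply: cvgM
  | |- context [fun _ => - _] => apply: cvgN
  | |- _ => assumption
  | |- _ => exact: cvg_cst
  end.

Definition qcontinuous (h : T -> quat R) := forall c, continuous (fun x => qcomp (h x) c).

Lemma qcontinuous_cst (q : quat R) : qcontinuous (fun=> q).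
Proof. by move=> c; exact: cst_continuous. Qed.

Lemma qcontinuous_mul (u v : T -> quat R) :
  qcontinuous u -> qcontinuous v -> qcontinuous (fun x => qmul (u x) (v x)).
Proof.
move=> uC vC c x.
have := uC 0%N x; have := uC 1%N x; have := uC 2%N x; have := uC 3%N x.
have := vC 0%N x; have := vC 1%N x; have := vC 2%N x; have := vC 3%N x.
rewrite /qcomp /= => ? ? ? ? ? ? ? ?.
by case: c => [|[|[|[|c]]]] /=; cvg_arith.
Qed.

Lemma qcontinuous_big (I : Type) (s : seq I) (f : I -> T -> quat R) :
  (forall i, qcontinuous (f i)) ->
  qcontinuous (fun x => \big[@qmul R/qone R]_(i <- s) f i x).
Proof.
move=> fC; elim: s => [|i s IH].
  rewrite (_ : (fun x => _) = fun=> qone R); first exact: qcontinuous_cst.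
  by apply: funext => x; rewrite big_nil.
rewrite (_ : (fun x => _) = fun x => qmul (f i x) (\big[@qmul R/qone R]_(j <- s) f j x)).
  exact: qcontinuous_mul.
by apply: funext => x; rewrite big_cons.
Qed.

Lemma qnorm2_continuous (u : T -> quat R) :
  qcontinuous u -> continuous (fun x => qnorm2 (u x)).
Proof.
move=> uC x.
have := uC 0%N x; have := uC 1%N x; have := uC 2%N x; have := uC 3%N x.
by rewrite /qcomp /qnorm2 /GRing.exp /= => ? ? ? ?; cvg_arith.
Qed.

Lemma qnorm2B_continuous (u v : T -> quat R) : qcontinuous u -> qcontinuous v ->
  continuous (fun x => qnorm2 (u x) - qnorm2 (v x)).
Proof.
move=> uC vC x; apply: cvgB; [exact: qnorm2_continuous uC x | exact: qnorm2_continuous vC x].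
Qed.

End QuatContinuity.

Section Pairs.
Variables (R : realType) (K : KK).
Local Notation d := (dK K).
Implicit Types (a b : quat R) (t : R).

Lemma pair_orbit_of_invariants a b a' b' :
  inK d a -> inK d b -> inK d a' -> inK d b' ->
  qmul a b = qmul a' b' -> qnorm2 a - qnorm2 b = qnorm2 a' - qnorm2 b' ->
  exists u, [/\ inK d u, qnorm2 u = 1, qmul a (qconj u) = a' & qmul u b = b'].
Proof.
move=> aK bK a'K b'K ab_eq gap_eq.
have [na nb] : qnorm2 a = qnorm2 a' /\ qnorm2 b = qnorm2 b'.
  by apply: eq_of_mul_sub; rewrite ?qnorm2_ge0 // -!qnorm2_mul ab_eq.
have [a0|an0] := eqVneq (qnorm2 a) 0; last first.
  exists (qscale (qnorm2 a)^-1 (qmul (qconj a') a)); split.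
  - by apply/inK_scale/inK_mul => //; exact: inK_conj.
  - by rewrite qnorm2_scale qnorm2_mul qnorm2_conj -na; field.
  - rewrite qconj_scale qmul_scaler qconj_mul qconjK qmulA qmulq_conj qmul_reall.
    by rewrite qscaleA mulVf // qscale1.
  - rewrite qmul_scalel -qmulA ab_eq qmulA qmul_conjq qmul_reall qscaleA -na.
    by rewrite mulVf // qscale1.
have -> : a = qzero R by exact: qnorm2_eq0.
have -> : a' = qzero R by apply: qnorm2_eq0; rewrite -na.
have [b0|bn0] := eqVneq (qnorm2 b) 0.
  have -> : b = qzero R by exact: qnorm2_eq0.
  have -> : b' = qzero R by apply: qnorm2_eq0; rewrite -nb.
  by exists (qone R); split; rewrite ?qnorm2_one ?qmul0q ?qmulq0 //; exact: inK_one.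
exists (qscale (qnorm2 b)^-1 (qmul b' (qconj b))); split.
- by apply/inK_scale/inK_mul => //; exact: inK_conj.
- by rewrite qnorm2_scale qnorm2_mul qnorm2_conj -nb; field.
- exact: qmul0q.
- by rewrite qmul_scalel -qmulA qmul_conjq qmul_realr qscaleA mulVf // qscale1.
Qed.

(* Any (t, P) is attained: |a|^2 = (s + t) / 2 and |b|^2 = (s - t) / 2 with
   s = sqrt (t^2 + 4 |P|^2) are the norms with |a|^2 |b|^2 = |P|^2 and
   |a|^2 - |b|^2 = t; take a real and b = P / a (b real if P = 0). *)
Definition factor_pair t (P : quat R) : quat R * quat R :=
  let s := Num.sqrt (t ^+ 2 + 4 * qnorm2 P) in
  let a := Num.sqrt ((s + t) / 2) in
  (qreal a,
   if qnorm2 P == 0 then qreal (Num.sqrt ((s - t) / 2)) else qscale a^-1 P).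

Lemma factor_pairP t P :
  qmul (factor_pair t P).1 (factor_pair t P).2 = P /\
  qnorm2 (factor_pair t P).1 - qnorm2 (factor_pair t P).2 = t.
Proof.
rewrite /factor_pair /=; set N := qnorm2 P; set s := Num.sqrt (t ^+ 2 + 4 * N).
have N0 : 0 <= N by exact: qnorm2_ge0.
have s2 : s ^+ 2 = t ^+ 2 + 4 * N by rewrite sqr_sqrtr //; nra.
have s0 : 0 <= s by exact: sqrtr_ge0.
have sDt : 0 <= s + t by nra.
have sBt : 0 <= s - t by nra.
have [NP0|Nn0] := eqVneq N 0.
  rewrite qmul_real !qnorm2_real -sqrtrM ?divr_ge0 // !sqr_sqrtr ?divr_ge0 //.
  split; last by field.
  have -> : (s + t) / 2 * ((s - t) / 2) = (s ^+ 2 - t ^+ 2) / 4 by field.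
  by rewrite s2 NP0 mulr0 addr0 subrr mul0r sqrtr0 (qnorm2_eq0 NP0).
have N_gt0 : 0 < N by rewrite lt_def Nn0.
have sDt_gt0 : 0 < s + t.
  have : t ^+ 2 < s ^+ 2 by rewrite s2; nra.
  nra.
have a_gt0 : 0 < Num.sqrt ((s + t) / 2) by rewrite sqrtr_gt0; nra.
split; first by rewrite qmul_reall qscaleA mulfV ?qscale1 // gt_eqF.
rewrite qnorm2_real qnorm2_scale exprVn sqr_sqrtr; last nra.
rewrite -/N (_ : N = (s ^+ 2 - t ^+ 2) / 4); last by rewrite s2; field.
by field; rewrite gt_eqF.
Qed.

Lemma inK_factor_pair t P : inK d P ->
  inK d (factor_pair t P).1 /\ inK d (factor_pair t P).2.
Proof.
move=> PK; split; first exact: inK_real.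
by rewrite /factor_pair /=; case: eqP => _; [exact: inK_real | exact: inK_scale].
Qed.

End Pairs.

Section Invariants.
Variables (R : realType) (K : KK) (k : nat).
Local Notation d := (dK K).
Implicit Types (X Y Z : 'M[R]_(k, d)) (G : 'M[R]_(k.-1, d)) (u : quat R).

(* Indices are 0-based: qentry X j is q_(j+1) (junk value 1 for j >= k),
   tailprod X j is S_(j+1) = q_(j+1) ... q_k, and gleft G j is g_j (g_0 = 1),
   the left factor of q_(j+1) in the action. *)
Definition qentry X n : quat R :=
  if @insub nat (fun m => (m < k)%N) 'I_k n is Some i then rowq X i else qone R.

Definition tailprod X j := \big[@qmul R/qone R]_(j <= i < k) qentry X i.

Definition norm_gap X j := qnorm2 (qentry X j) - qnorm2 (tailprod X j.+1).

Definition gleft G j := if j is n.+1 then gext G n else qone R.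

Lemma qentry_ord X (i : 'I_k) : qentry X i = rowq X i.
Proof. by rewrite /qentry valK. Qed.

Lemma inK_qentry X j : inK d (qentry X j).
Proof. by rewrite /qentry; case: insub => [i|]; [exact: inK_emb | exact: inK_one]. Qed.

Lemma inK_tailprod X j : inK d (tailprod X j).
Proof.
apply: big_ind; [exact: inK_one | exact: inK_mul | move=> i _; exact: inK_qentry].
Qed.

Lemma tailprodS X j : (j < k)%N -> tailprod X j = qmul (qentry X j) (tailprod X j.+1).
Proof. exact: big_ltn. Qed.

Lemma tailprod_last X : (0 < k)%N -> tailprod X k.-1 = qentry X k.-1.
Proof. by move=> k_gt0; rewrite tailprodS ?prednK // /tailprod big_geq // qmulq1. Qed.

Lemma rowq_inj X Y : (forall i, rowq X i = rowq Y i) -> X = Y.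
Proof. by move=> XY; apply/row_matrixP => i; apply: (emb_inj (dK_le4 K)); exact: XY. Qed.

Lemma gleft_ge G j : (k <= j)%N -> gleft G j = qone R.
Proof.
by case: j => [|j] //= kj; rewrite /gext insubF // ltnNge -subn1 leq_subLR add1n kj.
Qed.

Lemma unit_gleft G j : unit_tuple G -> qnorm2 (gleft G j) = 1.
Proof. by case: j => [|j] unitG; [exact: qnorm2_one | exact: unit_gext]. Qed.

Lemma qentry_act G X j : unit_tuple G -> (j < k)%N ->
  qentry (act G X) j = qmul (qmul (gleft G j) (qentry X j)) (qconj (gext G j)).
Proof.
move=> unitG jk; have /act_rowsP actE := erefl (act G X).
by rewrite -[j]/(val (Ordinal jk)) !qentry_ord actE qinv_unit //; exact: unit_gext.
Qed.

Lemma tailprod_act G X j : unit_tuple G -> (j <= k)%N ->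
  tailprod (act G X) j = qmul (gleft G j) (tailprod X j).
Proof.
move=> unitG; move Ekj: (k - j)%N => m; elim: m j Ekj => [|m IH] j Ekj jk.
  have -> : j = k by apply/eqP; rewrite eqn_leq jk -subn_eq0 Ekj.
  by rewrite /tailprod !big_geq // gleft_ge // qmul1q.
have jk' : (j < k)%N by rewrite -subn_gt0 Ekj.
rewrite [LHS]tailprodS // IH ?subnS ?Ekj // qentry_act // (tailprodS X jk') -!qmulA.
by rewrite [qmul (qconj _) _]qmulA qconjM_unit ?qmul1q //; exact: unit_gext.
Qed.

Lemma norm_gap_act G X j : unit_tuple G -> (j < k)%N ->
  norm_gap (act G X) j = norm_gap X j.
Proof.
move=> unitG jk; rewrite /norm_gap qentry_act // tailprod_act //.
rewrite !qnorm2_mul qnorm2_conj unit_gleft // unit_gext //.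
by rewrite !mul1r mulr1.
Qed.

Lemma same_orbit_norm_gap X Y j : same_orbit X Y -> (j < k)%N ->
  norm_gap X j = norm_gap Y j.
Proof. by case=> G [unitG <-] jk; rewrite norm_gap_act. Qed.

Lemma same_orbit_tailprod0 X Y : same_orbit X Y -> tailprod X 0 = tailprod Y 0.
Proof. by case=> G [unitG <-]; rewrite tailprod_act // qmul1q. Qed.

Definition mxq m (f : 'I_m -> quat R) : 'M[R]_(m, d) := \matrix_(i, c) qcomp (f i) c.

Lemma rowq_mxq m (f : 'I_m -> quat R) i :
  (forall i, inK d (f i)) -> rowq (mxq f) i = f i.
Proof.
move=> fK; rewrite /rowq -[f i](emb_proj (dK_le4 K) (fK i)); congr emb.
by apply/rowP => c; rewrite !mxE.
Qed.

Definition unit_at u b : 'M[R]_(k.-1, d) :=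
  mxq (fun o : 'I_k.-1 => if val o == b then u else qone R).

Section UnitAt.
Variables (u : quat R) (b : nat).
Hypotheses (uK : inK d u) (bk : (b < k.-1)%N).

Lemma gext_unit_at n : gext (unit_at u b) n = if n == b then u else qone R.
Proof.
rewrite /gext; case: insubP => [o _ <-|nk]; last by case: eqP nk => // ->; rewrite bk.
by rewrite rowq_mxq // => o'; case: eqP => _ //; exact: inK_one.
Qed.

Lemma gleft_unit_at j : gleft (unit_at u b) j = if j == b.+1 then u else qone R.
Proof. by case: j => [|j] //=; rewrite gext_unit_at. Qed.

Lemma unit_tuple_unit_at : qnorm2 u = 1 -> unit_tuple (unit_at u b).
Proof.
move=> u1 o; rewrite rowq_mxq; first by case: eqP => _ //; exact: qnorm2_one.
by move=> o'; case: eqP => _ //; exact: inK_one.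
Qed.

End UnitAt.

Lemma align_entry Z Y b : (b < k.-1)%N ->
  norm_gap Z b = norm_gap Y b -> tailprod Z b = tailprod Y b ->
  exists Z', [/\ same_orbit Z Z', forall i, (i < b)%N -> qentry Z' i = qentry Z i,
                 qentry Z' b = qentry Y b & tailprod Z' b.+1 = tailprod Y b.+1].
Proof.
move=> bk gapZY tailZY.
have bk' : (b < k)%N by apply: leq_trans bk (leq_pred _).
have [u [uK u1 Zu Yu]] := pair_orbit_of_invariants (inK_qentry Z b)
  (inK_tailprod Z b.+1) (inK_qentry Y b) (inK_tailprod Y b.+1)
  (etrans (esym (tailprodS Z bk')) (etrans tailZY (tailprodS Y bk'))) gapZY.
have unitG := unit_tuple_unit_at b uK u1.
exists (act (unit_at u b) Z); split.
- by exists (unit_at u b).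
- move=> i ib; rewrite qentry_act ?(ltn_trans ib) // gleft_unit_at // gext_unit_at //.
  rewrite ltn_eqF ?(ltn_trans ib) // ltn_eqF //.
  by rewrite qconj_one qmul1q qmulq1.
- rewrite qentry_act // gleft_unit_at // gext_unit_at // eqxx.
  by rewrite ltn_eqF // qmul1q.
- by rewrite tailprod_act // gleft_unit_at // eqxx.
Qed.

Lemma orbit_of_invariants X Y : (0 < k)%N ->
  (forall j, (j < k.-1)%N -> norm_gap X j = norm_gap Y j) ->
  tailprod X 0 = tailprod Y 0 -> same_orbit X Y.
Proof.
move=> k_gt0 gapXY tailXY.
have aligned m : (m <= k.-1)%N -> exists Z, [/\ same_orbit X Z,
    forall i, (i < m)%N -> qentry Z i = qentry Y i & tailprod Z m = tailprod Y m].
  elim: m => [_|m IH mk]; first by exists X; split => //; exact: same_orbit_refl.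
  have [Z [XZ ZY tailZY]] := IH (ltnW mk).
  have gapZY : norm_gap Z m = norm_gap Y m.
    rewrite -(same_orbit_norm_gap XZ) ?gapXY //.
    by apply: leq_trans mk (leq_pred _).
  have [Z' [ZZ' Z'Z Z'Y tailZ'Y]] := align_entry mk gapZY tailZY.
  exists Z'; split => //; first exact: same_orbit_trans XZ ZZ'.
  move=> i; rewrite ltnS leq_eqVlt => /predU1P [-> //| im].
  by rewrite Z'Z // ZY.
have [Z [XZ ZY tailZY]] := aligned k.-1 (leqnn _).
suff -> : Y = Z by [].
apply: rowq_inj => i; rewrite -!qentry_ord.
have [ik|] := ltnP i k.-1; first by rewrite ZY.
move=> ik; have -> : val i = k.-1.
  by apply/eqP; rewrite eqn_leq ik andbT -ltnS prednK ?ltn_ord.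
by rewrite -!tailprod_last.
Qed.

Section Attained.
Variable t : nat -> R.

(* Peel the factors off P from the left: factor_tail j is S_(j+1), and
   factor_pair splits it into q_(j+1) and S_(j+2). *)
Fixpoint factor_tail (P : quat R) j : quat R :=
  if j is j'.+1 then (factor_pair (t j') (factor_tail P j')).2 else P.

Definition factor_entry P j :=
  if (j < k.-1)%N then (factor_pair (t j) (factor_tail P j)).1 else factor_tail P j.

Lemma invariants_attained P : (0 < k)%N -> inK d P ->
  exists X : 'M[R]_(k, d),
    (forall j, (j < k.-1)%N -> norm_gap X j = t j) /\ tailprod X 0 = P.
Proof.
move=> k_gt0 PK.
have tailK j : inK d (factor_tail P j).
  by elim: j => [|j IH] //=; case: (inK_factor_pair (t j) IH).
have entryK j : inK d (factor_entry P j).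
  by rewrite /factor_entry; case: ifP => _ //; case: (inK_factor_pair (t j) (tailK j)).
pose X := mxq (fun i : 'I_k => factor_entry P i).
have XE j : (j < k)%N -> qentry X j = factor_entry P j.
  by move=> jk; rewrite -[j]/(val (Ordinal jk)) qentry_ord rowq_mxq.
have tailXE j : (j <= k.-1)%N -> tailprod X j = factor_tail P j.
  move Em: (k.-1 - j)%N => m; elim: m j Em => [|m IH] j Em jk.
    have -> : j = k.-1 by apply/eqP; rewrite eqn_leq jk -subn_eq0 Em.
    by rewrite tailprod_last // XE ?prednK // /factor_entry ltnn.
  have jk' : (j < k.-1)%N by rewrite -subn_gt0 Em.
  rewrite tailprodS ?(leq_trans jk') ?leq_pred // IH ?subnS ?Em //.
  rewrite XE ?(leq_trans jk') ?leq_pred // /factor_entry jk'.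
  by case: (factor_pairP (t j) (factor_tail P j)).
exists X; split; last by rewrite tailXE.
move=> j jk; rewrite /norm_gap XE ?(leq_trans jk) ?leq_pred // tailXE //.
by rewrite /factor_entry jk; case: (factor_pairP (t j) (factor_tail P j)).
Qed.

End Attained.

Lemma entry_rowq X i c : X i c = qcomp (rowq X i) c.
Proof.
rewrite /rowq qcomp_emb ?dK_le4 // (coord_lt _ (ltn_ord c)) mxE.
by congr (X _ _); exact: val_inj.
Qed.

Lemma qcontinuous_qentry j : qcontinuous (fun X => qentry X j).
Proof.
move=> c; have [jk|kj] := ltnP j k; last first.
  rewrite (_ : (fun X => _) = fun=> qcomp (qone R) c); first exact: cst_continuous.
  by apply: funext => X; rewrite /qentry insubF // ltnNge kj.
have [cd|dc] := ltnP c d; last first.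
  rewrite (_ : (fun X => _) = fun=> 0); first exact: cst_continuous.
  by apply: funext => X; rewrite -[j]/(val (Ordinal jk)) qentry_ord inK_emb.
rewrite (_ : (fun X => _) = fun X => X (Ordinal jk) (Ordinal cd)).
  exact: coord_continuous.
by apply: funext => X; rewrite entry_rowq -qentry_ord.
Qed.

Lemma qcontinuous_tailprod j : qcontinuous (fun X => tailprod X j).
Proof. by apply: qcontinuous_big => i; exact: qcontinuous_qentry. Qed.

Lemma norm_gap_continuous j : continuous (fun X => norm_gap X j).
Proof.
by apply: qnorm2B_continuous; [exact: qcontinuous_qentry | exact: qcontinuous_tailprod].
Qed.

Section Bounds.
Variables (X : 'M[R]_(k, d)) (M : R).
Hypotheses (M_ge0 : 0 <= M) (gapM : forall j, (j < k.-1)%N -> `|norm_gap X j| <= M).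

Lemma norm2_qentry_tailprodS_le j : (j < k.-1)%N ->
  qnorm2 (qentry X j) + qnorm2 (tailprod X j.+1) <= M + 1 + qnorm2 (tailprod X j).
Proof.
move=> jk; have := lerD_normBM (qnorm2_ge0 (qentry X j)) (qnorm2_ge0 (tailprod X j.+1)).
rewrite -qnorm2_mul -tailprodS ?(leq_trans jk) ?leq_pred // -/(norm_gap X j).
by have := gapM jk; lra.
Qed.

Lemma norm2_tailprod_le j : (j <= k.-1)%N ->
  qnorm2 (tailprod X j) <= qnorm2 (tailprod X 0) + j%:R * (M + 1).
Proof.
elim: j => [|j IH] jk; first by rewrite mul0r addr0.
have := norm2_qentry_tailprodS_le jk; have := IH (ltnW jk).
by have := qnorm2_ge0 (qentry X j); rewrite -natr1; lra.
Qed.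

Lemma norm2_qentry_le i : (i < k)%N ->
  qnorm2 (qentry X i) <= qnorm2 (tailprod X 0) + k%:R * (M + 1).
Proof.
move=> ik; have M1_ge0 : 0 <= M + 1 by rewrite addr_ge0.
have [ik'|] := ltnP i k.-1.
  have := norm2_qentry_tailprodS_le ik'; have := norm2_tailprod_le (ltnW ik').
  have : i.+1%:R * (M + 1) <= k%:R * (M + 1) by rewrite ler_wpM2r ?ler_nat.
  by have := qnorm2_ge0 (tailprod X i.+1); rewrite -natr1; lra.
have k_gt0 : (0 < k)%N by apply: leq_ltn_trans ik.
move=> ki; have -> : i = k.-1 by apply/eqP; rewrite eqn_leq ki andbT -ltnS prednK.
rewrite -tailprod_last //; apply: le_trans (norm2_tailprod_le (leqnn _)) _.
by rewrite lerD2l ler_wpM2r ?ler_nat ?leq_pred.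
Qed.

End Bounds.

Section InvariantsMap.
Hypothesis k_gt0 : (0 < k)%N.

Lemma dim_invariants : (k.-1 + d = d + k - 1)%N.
Proof. by rewrite addnC -addnBA // subn1. Qed.

Definition invariants X : 'rV[R]_(d + k - 1) :=
  castmx (erefl, dim_invariants)
    (row_mx (\row_(j < k.-1) norm_gap X j) (\row_(c < d) qcomp (tailprod X 0) c)).

Lemma invariants_gap X (j : 'I_k.-1) :
  invariants X ord0 (cast_ord dim_invariants (lshift d j)) = norm_gap X j.
Proof. by rewrite castmxE /= cast_ordK row_mxEl mxE. Qed.

Lemma invariants_tail X (c : 'I_d) :
  invariants X ord0 (cast_ord dim_invariants (rshift k.-1 c)) = qcomp (tailprod X 0) c.
Proof. by rewrite castmxE /= cast_ordK row_mxEr mxE. Qed.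

Lemma invariants_eq X Y : invariants X = invariants Y <-> same_orbit X Y.
Proof.
split => [/(can_inj (castmxK _ _)) /eq_row_mx [gapXY tailXY] | XY].
  apply: orbit_of_invariants => // [j jk|].
    by have := congr1 (fun v : 'rV[R]_k.-1 => v ord0 (Ordinal jk)) gapXY; rewrite !mxE.
  rewrite -[LHS](emb_proj (dK_le4 K) (inK_tailprod X 0)) tailXY.
  by rewrite emb_proj ?dK_le4 //; exact: inK_tailprod.
congr castmx; congr row_mx; apply/rowP => j; rewrite !mxE.
  by apply: same_orbit_norm_gap => //; exact: leq_trans (ltn_ord j) (leq_pred _).
by rewrite (same_orbit_tailprod0 XY).
Qed.

Lemma invariants_surj y : exists X, invariants X = y.
Proof.
set z := castmx (erefl, esym dim_invariants) y.
have [X [gapX tailX]] :=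
  invariants_attained (Defs.coord (lsubmx z)) k_gt0 (inK_emb (rsubmx z)).
exists X; rewrite -[y](castmxKV erefl dim_invariants) -/z -[z in RHS]hsubmxK.
congr castmx; congr row_mx; apply/rowP => j; rewrite mxE.
  by rewrite gapX // (coord_lt _ (ltn_ord j)); congr (_ _ _); exact: val_inj.
rewrite tailX qcomp_emb ?dK_le4 // (coord_lt _ (ltn_ord j)).
by congr (_ _ _); exact: val_inj.
Qed.

Lemma invariants_continuous : continuous invariants.
Proof.
apply: mx_continuous => i l; rewrite (ord1 i).
rewrite -[l](cast_ordKV dim_invariants).
case: (splitP (cast_ord (esym dim_invariants) l)) => c Ec.
  rewrite (_ : cast_ord _ l = lshift d c); last exact: val_inj.
  rewrite (_ : (fun X => _) = fun X => norm_gap X c).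
    exact: norm_gap_continuous.
  by apply: funext => X; rewrite invariants_gap.
rewrite (_ : cast_ord _ l = rshift k.-1 c); last exact: val_inj.
rewrite (_ : (fun X => _) = fun X => qcomp (tailprod X 0) c).
  exact: qcontinuous_tailprod.
by apply: funext => X; rewrite invariants_tail.
Qed.

Lemma invariants_ball_bounded (y : 'rV[R]_(d + k - 1)) : exists B, forall X,
  ball y 1 (invariants X) -> forall i j, `|X i j| <= B.
Proof.
pose M := 1 + \sum_l `|y ord0 l|.
have M_ge0 : 0 <= M by rewrite addr_ge0 ?sumr_ge0.
exists (1 + (4 * M ^+ 2 + k%:R * (M + 1))) => X yX i c.
have entry_le l : `|invariants X ord0 l| <= M.
  have [_ /(_ ord0 l)] := yX; rewrite -ball_normE /= => /ltW yXl.
  have yl : `|y ord0 l| <= \sum_l `|y ord0 l| by rewrite (bigD1 l) //= lerDl sumr_ge0.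
  have := ler_normD (y ord0 l) (invariants X ord0 l - y ord0 l).
  by rewrite addrC subrK distrC /M; lra.
have gapM j : (j < k.-1)%N -> `|norm_gap X j| <= M.
  by move=> jk; rewrite -(invariants_gap X (Ordinal jk)).
have tailM : qnorm2 (tailprod X 0) <= 4 * M ^+ 2.
  apply: qnorm2_le4 => e _; have [ed|de] := ltnP e d; last first.
    by rewrite inK_tailprod // expr0n /= exprn_ge0.
  have := entry_le (cast_ord dim_invariants (rshift k.-1 (Ordinal ed))).
  by rewrite invariants_tail ler_norml => /andP [? ?]; nra.
rewrite entry_rowq; apply: le_trans (normr_le1Dsqr _) _; rewrite lerD2l.
apply: le_trans (qcomp_sqr_le _ _) _; rewrite -qentry_ord.
by apply: le_trans (norm2_qentry_le M_ge0 gapM (ltn_ord i)) _; rewrite lerD2r.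
Qed.

Lemma invariants_proper (y : 'rV[R]_(d + k - 1)) : exists2 N, nbhs y N &
  exists2 C, compact C & invariants @^-1` N `<=` C.
Proof.
have [B XB] := invariants_ball_bounded y.
exists (ball y 1); first exact: nbhsx_ballx.
exists [set X : 'M[R]_(k, d) | forall i j, `|X i j| <= B]; last exact: XB.
exact: mx_box_compact.
Qed.

End InvariantsMap.

End Invariants.

Theorem proposition3p5 (R : realType) (K : KK) (k : nat) (hk : (2 <= k)%N) :
  exists (f : orbit_space R K k -> 'rV[R]_(dK K + k - 1))
         (g : 'rV[R]_(dK K + k - 1) -> orbit_space R K k),
    homeomorphism f g.
Proof.
have k_gt0 : (0 < k)%N by exact: leq_trans hk.
apply: (@quotient_homeomorphism _ _ (orbit_equiv_rel R K k) (invariants k_gt0)).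
- exact: invariants_continuous.
- by move=> X Y; rewrite invariants_eq; split => [XY | /asboolP //]; exact/asboolP.
- exact: invariants_surj.
- apply: proper_closed_map; first exact: norm_hausdorff.
    exact: invariants_continuous.
  exact: invariants_proper.
Qed.
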